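(* Let $V$ be a Banach $\mathbb O$-bimodule and $T\in\mathscr B_{\mathcal{RO}}(V)$. The following are equivalent: (1) $[T,T^{\circledcirc n},x]_{\circledcirc}=0$ for all $x\in V$ and all $n=0,1,2,\dots$; (2) $T^n\in\mathscr B_{\mathcal{RO}}(V)$ for all $n=0,1,2,\dots$; (3) $[T^{n\circledcirc},T,x]_{\circledcirc}=0$ for all $x\in V$ and all $n=0,1,2,\dots$. Moreover, under any of these conditions $T^{\circledcirc n}=T^n=T^{n\circledcirc}$ for all $n$, and hence $T^n\circledcirc T^m=T^{n+m}$.
   Context: $\mathbb O$ is the real octonion algebra with basis $e_0=1,\dots,e_7$ and conjugation $\bar x$. An $\mathbb O$-bimodule is a real vector space $M$ with real-bilinear left and right multiplications by $\mathbb O$ (with $1x=x1=x$) whose associators $[p,q,x]=(pq)x-p(qx)$, $[p,x,q]=(px)q-p(xq)$, $[x,p,q]=(xp)q-x(pq)$ satisfy $[p,q,x]=[q,x,p]=[x,p,q]=-[q,p,x]$. Its real part is $\operatorname{Re}M=\{m: pm=mp,\ [p,q,m]=0\ \forall p,q\}$; every $x$ decomposes uniquely as $x=\sum_{i=0}^7e_ix_i$ with $x_i\in\operatorname{Re}M$ and $\operatorname{Re}x:=x_0$. A Banach $\mathbb O$-bimodule is one with a complete norm with $\|px\|=\|xp\|=|p|\|x\|$. $\mathscr B_{\mathbb R}(V)$: bounded real-linear operators, powers $T^n$ by ordinary composition, $T^0=\mathcal I$. For real-linear $f$, $B_p(f,x)=f(x)p-f(xp)$; $f$ is right para-linear if $\operatorname{Re}B_p(f,x)=0$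 for all $p\in\mathbb O,x$; $\mathscr B_{\mathcal{RO}}(V)$ is the set of bounded right para-linear operators. For real-linear $h:\operatorname{Re}V\to V$, $(\operatorname{ext}h)(\sum_ix_ie_i)=\sum_ih(x_i)e_i$ ($x_i\in\operatorname{Re}V$); for real-linear $h:V\to\operatorname{Re}V$, $(\operatorname{lif}h)(x)=\sum_{i=0}^7h(x\bar e_i)e_i$. $T^{\circledcirc n}=\operatorname{ext}(T^n|_{\operatorname{Re}V})$, $T^{n\circledcirc}=\operatorname{lif}(\operatorname{Re}\circ T^n)$. For $f,g\in\mathscr B_{\mathcal{RO}}(V)$: $f\circledcirc g=\operatorname{ext}((f\circ g)|_{\operatorname{Re}V})$ (equivalently $\operatorname{lif}(\operatorname{Re}\circ f\circ g)$) and $[f,g,x]_{\circledcirc}=(f\circledcirc g)(x)-f(g(x))$. *)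

From HB Require Import structures.
From mathcomp Require Import all_boot all_order all_algebra.
From mathcomp Require Import all_classical all_reals all_analysis.
From Stdlib Require Import ClassicalEpsilon.
Set Implicit Arguments. Unset Strict Implicit. Unset Printing Implicit Defensive.
Import Order.TTheory GRing.Theory Num.Theory.
Import numFieldNormedType.Exports.
Local Open Scope ring_scope.

(* The real octonion algebra O over a real type R, as row vectors of   *)
(* coordinates w.r.t. the basis e_0 = 1, e_1, ..., e_7.                *)
(* Multiplication table (Baez's convention): the 7 oriented lines      *)
(* (i, i+1, i+3) mod 7, i.e. e_a e_b = e_c, e_b e_c = e_a, e_c e_a = e_b *)
(* and anticommutation; e_i e_i = -1 for i >= 1.                        *)

Definition oct_lines : seq (nat * nat * nat) :=
  [:: (1,2,4); (2,3,5); (3,4,6); (4,5,7); (5,6,1); (6,7,2); (7,1,3)]%N.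

(* e_i e_j = (-1)^(fst) e_(snd)  *)
Definition oct_tab (i j : nat) : bool * nat :=
  if i == 0%N then (false, j)
  else if j == 0%N then (false, i)
  else if i == j then (true, 0%N)
  else foldr (fun (l : nat * nat * nat) acc =>
         let: (a, b, c) := l in
         if (i, j) == (a, b) then (false, c)
         else if (i, j) == (b, c) then (false, a)
         else if (i, j) == (c, a) then (false, b)
         else if (i, j) == (b, a) then (true, c)
         else if (i, j) == (c, b) then (true, a)
         else if (i, j) == (a, c) then (true, b)
         else acc) (false, 0%N) oct_lines.

Section Octonions.
Variable R : realType.

Definition oct := 'rV[R]_8.

Definition ocoef (p : oct) (i : 'I_8) : R := p ord0 i.

Definition obasis (i : 'I_8) : oct := \row_(j < 8) (j == i)%:R.

Definition omul (p q : oct) : oct :=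
  \row_(k < 8) \sum_(i < 8) \sum_(j < 8)
     (if (oct_tab i j).2 == (k : nat)
      then (-1) ^+ (oct_tab i j).1 * (ocoef p i * ocoef q j) else 0).

Definition oconj (p : oct) : oct :=
  \row_(j < 8) (if (j : nat) == 0%N then ocoef p j else - ocoef p j).

Definition onorm (p : oct) : R := Num.sqrt (\sum_(i < 8) ocoef p i ^+ 2).

End Octonions.

Section Bimodule.
Variables (R : realType) (V : completeNormedModType R).
Variables (lm : oct R -> V -> V) (rm : V -> oct R -> V).

Definition lassoc (p q : oct R) (x : V) : V := lm (omul p q) x - lm p (lm q x).
Definition massoc (p : oct R) (x : V) (q : oct R) : V := rm (lm p x) q - lm p (rm x q).
Definition rassoc (x : V) (p q : oct R) : V := rm (rm x p) q - rm x (omul p q).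

Definition is_real_elt (m : V) : Prop :=
  (forall p, lm p m = rm m p) /\ (forall p q, lassoc p q m = 0).

Definition is_decomp (x : V) (xs : 'I_8 -> V) : Prop :=
  (forall i, is_real_elt (xs i)) /\ x = \sum_(i < 8) lm (obasis R i) (xs i).

Definition is_Banach_OBimodule : Prop :=
  ((forall (a : R) p q x, lm (a *: p + q) x = a *: lm p x + lm q x) /\
   (forall p (a : R) x y, lm p (a *: x + y) = a *: lm p x + lm p y) /\
   (forall (a : R) x y p, rm (a *: x + y) p = a *: rm x p + rm y p) /\
   (forall x (a : R) p q, rm x (a *: p + q) = a *: rm x p + rm x q)) /\
  (forall x, lm (obasis R 0) x = x /\ rm x (obasis R 0) = x) /\
  (forall p q x, lassoc p q x = massoc q x p /\ massoc q x p = rassoc x p q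
                 /\ rassoc x p q = - lassoc q p x) /\
  (* ||px|| = ||xp|| = |p| ||x||  (completeness of the norm: V is a completeNormedModType) *)
  (forall p x, (`|lm p x| = onorm p * `|x|) /\ (`|rm x p| = onorm p * `|x|)) /\
  (forall x, (exists xs, is_decomp x xs) /\
             (forall xs ys, is_decomp x xs -> is_decomp x ys -> forall i, xs i = ys i)).

(* the (chosen) real components x_i of x; unique under the axioms *)
Definition rcomp (x : V) : 'I_8 -> V :=
  epsilon (inhabits (fun _ => 0)) (fun xs => is_decomp x xs).

Definition ReV (x : V) : V := rcomp x 0.

Definition is_bounded_linear (f : V -> V) : Prop :=
  (forall (a : R) x y, f (a *: x + y) = a *: f x + f y) /\
  (exists C : R, forall x, `|f x| <= C * `|x|).

Definition Bp (f : V -> V) (p : oct R) (x : V) : V := rm (f x) p - f (rm x p).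

Definition is_BRO (f : V -> V) : Prop :=
  is_bounded_linear f /\ (forall p x, ReV (Bp f p x) = 0).

Definition oext (h : V -> V) (x : V) : V :=
  \sum_(i < 8) rm (h (rcomp x i)) (obasis R i).

Definition olif (h : V -> V) (x : V) : V :=
  \sum_(i < 8) rm (h (rm x (oconj (obasis R i)))) (obasis R i).

Definition circpow (T : V -> V) (n : nat) : V -> V := oext (iter n T).
Definition powcirc (T : V -> V) (n : nat) : V -> V := olif (ReV \o iter n T).

Definition ocirc (f g : V -> V) : V -> V := oext (f \o g).
Definition circ_assoc (f g : V -> V) (x : V) : V := ocirc f g x - f (g x).

End Bimodule.

From Pilot Require Import Defs.
From HB Require Import structures.
From mathcomp Require Import all_boot all_order all_algebra.
From mathcomp Require Import all_classical all_reals all_analysis.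
From Stdlib Require Import ClassicalEpsilon.
Import Order.TTheory GRing.Theory Num.Theory.
Import numFieldNormedType.Exports.
Local Open Scope ring_scope.

(* For a real-linear f, right para-linearity says Re (f(x) p) = Re (f(x p)).
   Since every y is recovered from the real parts of the y e_k
   (y_k = ± Re (y e_k)), and Re ((y p) q) = Re (y (p q)) holds in any
   O-bimodule, this is equivalent to f commuting with right multiplication
   by the e_i on Re V, i.e. to f = ext (f|Re V); it also gives
   f = lif (Re o f).  So once T^n is para-linear, T^(o n) = T^n = T^(n o),
   and condition (1) (resp. (3)) at n says exactly that
   ext (T^(n+1)|Re V) = T^(n+1), i.e. that T^(n+1) is para-linear. *)

Set Implicit Arguments.
Unset Strict Implicit.
Unset Printing Implicit Defensive.

Lemma all_iota_ord n (P : nat -> bool) : all P (iota 0 n) -> forall i : 'I_n, P i.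
Proof. by move=> /allP P_iota i; apply: P_iota; rewrite mem_iota ltn_ord. Qed.

Lemma oct_tab_idx_lt8 (i j : 'I_8) : ((oct_tab i j).2 < 8)%N.
Proof.
have checked : all (fun i => all (fun j => (oct_tab i j).2 < 8)%N (iota 0 8)) (iota 0 8).
  by vm_compute.
by move: checked => /all_iota_ord/(_ i)/all_iota_ord/(_ j).
Qed.

(* The two checks below
   are the forms, on the table, of Re (e_i e_k) = (-1)^[k != 0] [i = k] and of
   Re ((e_i e_j) e_k) = Re (e_i (e_j e_k)); they are verified by evaluation. *)
Definition omul_re_check (i k : nat) : bool :=
  let t := oct_tab i k in
  ((0 == t.2) == (i == k)) && ((0 == t.2) ==> (t.1 == (k != 0)))%N.

Definition omul_re_assoc_check (i j k : nat) : bool :=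
  let ij_k := oct_tab (oct_tab i j).2 k in
  let i_jk := oct_tab i (oct_tab j k).2 in
  ((0 == ij_k.2) == (0 == i_jk.2))%N &&
  ((0 == ij_k.2)%N ==> ((oct_tab i j).1 (+) ij_k.1 == (oct_tab j k).1 (+) i_jk.1)).

Lemma omul_re_checkP (i k : 'I_8) : omul_re_check i k.
Proof.
have checked : all (fun i => all (omul_re_check i) (iota 0 8)) (iota 0 8).
  by vm_compute.
by move: checked => /all_iota_ord/(_ i)/all_iota_ord/(_ k).
Qed.

Lemma omul_re_assoc_checkP (i j k : 'I_8) : omul_re_assoc_check i j k.
Proof.
have checked : all (fun i => all (fun j => all (omul_re_assoc_check i j)
  (iota 0 8)) (iota 0 8)) (iota 0 8) by vm_compute.
by move: checked => /all_iota_ord/(_ i)/all_iota_ord/(_ j)/all_iota_ord/(_ k).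
Qed.

Section Octonion.
Variable R : realType.
Local Notation e := (obasis R).

Definition oct_idx (i j : 'I_8) : 'I_8 := Ordinal (oct_tab_idx_lt8 i j).
Definition oct_sign (i j : 'I_8) : R := (-1) ^+ (oct_tab i j).1.
Definition oconj_sign (k : 'I_8) : R := (-1) ^+ (k != 0 :> nat).

Lemma signr_natr_eq (b c z w : bool) :
  (z == w) && (z ==> (b == c)) -> (-1) ^+ b * z%:R = (-1) ^+ c * w%:R :> R.
Proof. by case/andP=> /eqP <-; case: z => /= [/eqP -> | _]; rewrite ?mulr0. Qed.

Lemma signr2_natr_eq (b1 b2 c1 c2 z w : bool) :
  (z == w) && (z ==> (b1 (+) b2 == c1 (+) c2)) ->
  (-1) ^+ b1 * ((-1) ^+ b2 * z%:R) = (-1) ^+ c1 * ((-1) ^+ c2 * w%:R) :> R.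
Proof. by rewrite !mulrA -!signr_addb; apply: signr_natr_eq. Qed.

Lemma ocoef_obasis (i k : 'I_8) : ocoef (e i) k = (k == i :> nat)%:R.
Proof. by rewrite /ocoef mxE. Qed.

Lemma ocoefZ (a : R) (p : oct R) k : ocoef (a *: p) k = a * ocoef p k.
Proof. by rewrite /ocoef mxE. Qed.

Lemma oct_expansion (q : oct R) : q = \sum_(l < 8) ocoef q l *: e l.
Proof.
apply/rowP => k; rewrite summxE (bigD1 k) //= big1 ?addr0.
  by rewrite !mxE eqxx mulr1 /ocoef (ord1 0).
by move=> l nl; rewrite !mxE eq_sym (negbTE nl) mulr0.
Qed.

Lemma omul_obasis i j : omul (e i) (e j) = oct_sign i j *: e (oct_idx i j).
Proof.
apply/rowP => k; rewrite !mxE.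
rewrite (bigD1 i) //= [X in _ + X]big1 ?addr0; last first.
  move=> i' ni; apply: big1 => j' _; rewrite /ocoef /obasis mxE (negbTE ni).
  by case: ifP; rewrite ?mul0r ?mulr0.
rewrite (bigD1 j) //= [X in _ + X]big1 ?addr0; last first.
  by move=> j' nj; rewrite /ocoef !mxE eqxx (negbTE nj) !mulr0; case: ifP.
rewrite /ocoef !mxE !eqxx !mulr1 /oct_sign -val_eqE /= eq_sym.
by case: eqP; rewrite ?mulr1 ?mulr0.
Qed.

Lemma omulZl (a : R) (p q : oct R) : omul (a *: p) q = a *: omul p q.
Proof.
apply/rowP => k; rewrite !mxE mulr_sumr; apply: eq_bigr => i _.
rewrite mulr_sumr; apply: eq_bigr => j _; rewrite /ocoef !mxE.
by case: ifP => _; rewrite ?mulr0 // -mulrA (mulrCA _ a).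
Qed.

Lemma omulZr (a : R) (p q : oct R) : omul p (a *: q) = a *: omul p q.
Proof.
apply/rowP => k; rewrite !mxE mulr_sumr; apply: eq_bigr => i _.
rewrite mulr_sumr; apply: eq_bigr => j _; rewrite /ocoef !mxE.
by case: ifP => _; rewrite ?mulr0 // (mulrCA (p ord0 i)) (mulrCA _ a).
Qed.

Lemma oconj_obasis i : oconj (e i) = oconj_sign i *: e i.
Proof.
apply/rowP => k; rewrite !mxE /ocoef !mxE /oconj_sign.
case: (eqVneq k i) => [->|nk]; first by case: eqP; rewrite ?mulr1 ?mulN1r.
by case: ifP; rewrite ?mulr0 ?oppr0.
Qed.

Lemma oconj_sign_sqr k : oconj_sign k * oconj_sign k = 1.
Proof. by rewrite -signr_addb addbb. Qed.

Lemma ocoef0_omul_obasis (i k : 'I_8) :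
  ocoef (omul (e i) (e k)) 0 = oconj_sign k * (i == k)%:R.
Proof.
rewrite omul_obasis ocoefZ ocoef_obasis -val_eqE /oct_sign /oconj_sign.
by apply: signr_natr_eq; apply: omul_re_checkP.
Qed.

Lemma ocoef0_omulA_obasis (i j k : 'I_8) :
  ocoef (omul (omul (e i) (e j)) (e k)) 0 = ocoef (omul (e i) (omul (e j) (e k))) 0.
Proof.
rewrite !omul_obasis omulZl omulZr !omul_obasis !ocoefZ !ocoef_obasis.
by apply: signr2_natr_eq; apply: omul_re_assoc_checkP.
Qed.

End Octonion.

Section LinearFun.
Variables (R : pzRingType) (U W : lmodType R) (f : U -> W).
Hypothesis f_lin : linear f.

Lemma linear_fun0 : f 0 = 0.
Proof.
have f00 : f 0 = f 0 + f 0 by have := f_lin 1 0 0; rewrite !scale1r addr0.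
by apply: (addrI (f 0)); rewrite addr0 -f00.
Qed.

Lemma linear_funD x y : f (x + y) = f x + f y.
Proof. by have := f_lin 1 x y; rewrite !scale1r. Qed.

Lemma linear_funZ a x : f (a *: x) = a *: f x.
Proof. by rewrite -[a *: x]addr0 f_lin linear_fun0 addr0. Qed.

Lemma linear_funB x y : f (x - y) = f x - f y.
Proof. by rewrite linear_funD -scaleN1r linear_funZ scaleN1r. Qed.

Lemma linear_fun_sum I (r : seq I) (P : pred I) F :
  f (\sum_(i <- r | P i) F i) = \sum_(i <- r | P i) f (F i).
Proof. exact: (big_morph f linear_funD linear_fun0). Qed.

End LinearFun.

Lemma linear_iter (R : pzRingType) (U : lmodType R) (f : U -> U) n :
  linear f -> linear (iter n f).
Proof. by move=> f_lin; elim: n => [//|n IH] a x y; rewrite !iterS IH f_lin. Qed.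

Lemma bounded_linear_iter (R : realType) (V : completeNormedModType R) (f : V -> V) n :
  is_bounded_linear f -> is_bounded_linear (iter n f).
Proof.
case=> f_lin [C f_bound]; split; first exact: linear_iter.
have C_ge0 : 0 <= Num.max C 0 by rewrite le_max lexx orbT.
have f_bound' x : `|f x| <= Num.max C 0 * `|x|.
  by apply: le_trans (f_bound x) _; apply: ler_wpM2r; rewrite ?le_max ?lexx.
elim: n => [|n [D iter_bound]]; first by exists 1 => x; rewrite mul1r.
exists (Num.max C 0 * D) => x /=; apply: le_trans (f_bound' _) _.
by rewrite -mulrA ler_wpM2l.
Qed.

Section BanachBimodule.
Variables (R : realType) (V : completeNormedModType R).
Variables (lm : oct R -> V -> V) (rm : V -> oct R -> V).
Hypothesis bimod : is_Banach_OBimodule lm rm.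
Local Notation e := (obasis R).
Local Notation c := (rcomp lm rm).
Local Notation Re := (Defs.ReV lm rm). (* [ReV] alone is [Num.Theory.ReV] *)
Local Notation real := (is_real_elt lm rm).

Lemma lm_linear p : linear (lm p).
Proof. by case: bimod => [[_ [lin _]] _]; apply: lin. Qed.

Lemma rm_linearl p : linear (rm^~ p).
Proof. by case: bimod => [[_ [_ [lin _]]] _] a x y; apply: lin. Qed.

Lemma rm_linearr x : linear (rm x).
Proof. by case: bimod => [[_ [_ [_ lin]]] _]; apply: lin. Qed.

Lemma real_elt0 : real 0.
Proof.
split=> [p | p q]; first by rewrite (linear_fun0 (lm_linear p)) (linear_fun0 (rm_linearl p)).
by rewrite /lassoc !(linear_fun0 (lm_linear _)) subrr.
Qed.

Lemma real_eltL a x y : real x -> real y -> real (a *: x + y).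
Proof.
move=> [x_comm x_assoc] [y_comm y_assoc]; split=> [p | p q].
  by rewrite (lm_linear p) (rm_linearl p) x_comm y_comm.
move: (x_assoc p q) (y_assoc p q).
by rewrite /lassoc !lm_linear => /subr0_eq -> /subr0_eq ->; rewrite subrr.
Qed.

Lemma real_eltZ a x : real x -> real (a *: x).
Proof. by move=> x_real; rewrite -[a *: x]addr0; apply: real_eltL => //; apply: real_elt0. Qed.

Lemma real_elt_sum I (r : seq I) (P : pred I) (F : I -> V) :
  (forall i, P i -> real (F i)) -> real (\sum_(i <- r | P i) F i).
Proof.
move=> F_real; apply: big_ind => //; first exact: real_elt0.
by move=> x y x_real y_real; rewrite -[x]scale1r; apply: real_eltL.
Qed.

Lemma rm_real_eltA r p q : real r -> rm (rm r p) q = rm r (omul p q).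
Proof.
case=> _ r_assoc; case: bimod => [_ [_ [assoc _]]].
have [lm_m [m_rm _]] := assoc p q r.
by apply/eqP; rewrite -subr_eq0 -[_ - _]/(rassoc rm r p q) -m_rm -lm_m r_assoc.
Qed.

Lemma sum_lm_real_elt (xs : 'I_8 -> V) : (forall i, real (xs i)) ->
  \sum_(i < 8) lm (e i) (xs i) = \sum_(i < 8) rm (xs i) (e i).
Proof. by move=> xs_real; apply: eq_bigr => i _; case: (xs_real i). Qed.

Lemma rcompP x : (forall i, real (c x i)) /\ x = \sum_(i < 8) rm (c x i) (e i).
Proof.
case: bimod => [_ [_ [_ [_ decomp]]]].
have [/(epsilon_spec (inhabits (fun=> 0))) [c_real x_sum] _] := decomp x.
by split=> //; rewrite -sum_lm_real_elt.
Qed.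

Lemma rcomp_sum_obasis (r : 'I_8 -> V) : (forall i, real (r i)) ->
  forall k, c (\sum_(i < 8) rm (r i) (e i)) k = r k.
Proof.
move=> r_real k; case: bimod => [_ [_ [_ [_ decomp]]]].
set x := \sum_(i < 8) _; have [c_real x_sum] := rcompP x.
by apply: (proj2 (decomp x)); split; rewrite ?sum_lm_real_elt.
Qed.

Lemma rcomp_inj z w : (forall k, c z k = c w k) -> z = w.
Proof.
move=> eq_c; rewrite (proj2 (rcompP z)) (proj2 (rcompP w)).
by apply: eq_bigr => i _; rewrite eq_c.
Qed.

Lemma rcomp_linear k : linear (c^~ k).
Proof.
move=> a x y; have [x_real x_sum] := rcompP x; have [y_real y_sum] := rcompP y.
have -> : a *: x + y = \sum_(i < 8) rm (a *: c x i + c y i) (e i).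
  rewrite {1}x_sum {1}y_sum scaler_sumr -big_split /=.
  by apply: eq_bigr => i _; rewrite rm_linearl.
by rewrite rcomp_sum_obasis // => i; apply: real_eltL.
Qed.

Lemma ReV_linear : linear Re.
Proof. exact: rcomp_linear. Qed.

Lemma rm_expansion y q : rm y q = \sum_(l < 8) ocoef q l *: rm y (e l).
Proof.
rewrite {1}(oct_expansion q) (linear_fun_sum (rm_linearr y)).
by apply: eq_bigr => l _; rewrite (linear_funZ (rm_linearr y)).
Qed.

Lemma rcomp_sum_rm (y : 'I_8 -> V) (q : 'I_8 -> oct R) : (forall i, real (y i)) ->
  forall k, c (\sum_(i < 8) rm (y i) (q i)) k = \sum_(i < 8) ocoef (q i) k *: y i.
Proof.
move=> y_real k.
have -> : \sum_(i < 8) rm (y i) (q i) =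
          \sum_(l < 8) rm (\sum_(i < 8) ocoef (q i) l *: y i) (e l).
  under [RHS]eq_bigr => l _ do rewrite (linear_fun_sum (rm_linearl (e l))).
  rewrite exchange_big /=; apply: eq_bigr => i _; rewrite rm_expansion.
  by apply: eq_bigr => l _; rewrite (linear_funZ (rm_linearl _)).
by rewrite rcomp_sum_obasis // => l; apply: real_elt_sum => i _; apply: real_eltZ.
Qed.

Lemma rm_rcomp y q : rm y q = \sum_(i < 8) rm (c y i) (omul (e i) q).
Proof.
have [y_real y_sum] := rcompP y.
rewrite {1}y_sum (linear_fun_sum (rm_linearl q)); apply: eq_bigr => i _.
exact: rm_real_eltA.
Qed.

Lemma ReV_rm_obasis y k : Re (rm y (e k)) = oconj_sign R k *: c y k.
Proof.
have [y_real _] := rcompP y.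
rewrite /Defs.ReV rm_rcomp rcomp_sum_rm // (bigD1 k) //= big1 ?addr0.
  by rewrite ocoef0_omul_obasis eqxx mulr1.
by move=> i ni; rewrite ocoef0_omul_obasis (negbTE ni) mulr0 scale0r.
Qed.

Lemma rcomp_ReV_rm y k : c y k = oconj_sign R k *: Re (rm y (e k)).
Proof. by rewrite ReV_rm_obasis scalerA oconj_sign_sqr scale1r. Qed.

Lemma ReV_rm_rm_obasis y j k :
  Re (rm (rm y (e j)) (e k)) = Re (rm y (omul (e j) (e k))).
Proof.
have [y_real _] := rcompP y.
rewrite (rm_rcomp y (e j)) (linear_fun_sum (rm_linearl _)) (rm_rcomp y).
under eq_bigr => i _ do rewrite rm_real_eltA //.
by rewrite /Defs.ReV !rcomp_sum_rm //; apply: eq_bigr => i _; rewrite ocoef0_omulA_obasis.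
Qed.

Definition right_para (f : V -> V) := forall p x, Re (Bp rm f p x) = 0.

Lemma right_paraP f : right_para f <-> forall p x, Re (rm (f x) p) = Re (f (rm x p)).
Proof.
split=> para p x; last by rewrite /Bp (linear_funB ReV_linear) para subrr.
by apply/eqP; rewrite -subr_eq0 -(linear_funB ReV_linear); apply/eqP/para.
Qed.

Lemma right_para_id : right_para id.
Proof. by move=> p x; rewrite /Bp subrr (linear_fun0 ReV_linear). Qed.

Lemma right_para_rm_obasis f r i :
  right_para f -> real r -> f (rm r (e i)) = rm (f r) (e i).
Proof.
move=> /right_paraP para r_real; apply: rcomp_inj => k.
by rewrite !(rcomp_ReV_rm _ k) para rm_real_eltA // ReV_rm_rm_obasis para.
Qed.

Lemma oext_right_para f : linear f -> right_para f -> oext lm rm f =1 f.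
Proof.
move=> f_lin para x; have [x_real x_sum] := rcompP x.
rewrite /oext [in RHS]x_sum (linear_fun_sum f_lin); apply: eq_bigr => i _.
by rewrite (right_para_rm_obasis i para (x_real i)).
Qed.

Lemma oext_rm f x q : linear f ->
  oext lm rm f (rm x q) = \sum_(i < 8) rm (f (c x i)) (omul (e i) q).
Proof.
move=> f_lin; have [x_real _] := rcompP x.
rewrite /oext.
under eq_bigr => k _ do
  rewrite (rm_rcomp x q) rcomp_sum_rm // (linear_fun_sum f_lin) (linear_fun_sum (rm_linearl _)).
rewrite exchange_big /=; apply: eq_bigr => i _; rewrite [RHS]rm_expansion.
by apply: eq_bigr => k _; rewrite (linear_funZ f_lin) (linear_funZ (rm_linearl _)).
Qed.

Lemma right_para_oext f : linear f -> oext lm rm f =1 f -> right_para f.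
Proof.
move=> f_lin f_ext; apply/right_paraP => p x.
have para_obasis l : Re (rm (f x) (e l)) = Re (f (rm x (e l))).
  rewrite -[f x]f_ext -f_ext oext_rm // /oext (linear_fun_sum (rm_linearl _)).
  rewrite !(linear_fun_sum ReV_linear); apply: eq_bigr => i _.
  exact: ReV_rm_rm_obasis.
rewrite rm_expansion (rm_expansion x p) (linear_fun_sum f_lin) !(linear_fun_sum ReV_linear).
by apply: eq_bigr => l _; rewrite (linear_funZ f_lin) !(linear_funZ ReV_linear) para_obasis.
Qed.

Lemma olif_right_para f : linear f -> right_para f -> olif rm (Re \o f) =1 f.
Proof.
move=> f_lin /right_paraP para x; have [_ fx_sum] := rcompP (f x).
rewrite /olif [RHS]fx_sum; apply: eq_bigr => i _; congr (rm _ _).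
rewrite /= oconj_obasis (linear_funZ (rm_linearr x)) (linear_funZ f_lin).
by rewrite (linear_funZ ReV_linear) -para [RHS]rcomp_ReV_rm.
Qed.

End BanachBimodule.

Section Powers.
Variables (R : realType) (V : completeNormedModType R).
Variables (lm : oct R -> V -> V) (rm : V -> oct R -> V) (T : V -> V).
Hypotheses (bimod : is_Banach_OBimodule lm rm) (T_BRO : is_BRO lm rm T).
Local Notation para := (right_para lm rm).

Let T_lin : linear T := proj1 (proj1 T_BRO).

Lemma BRO_iterP n : is_BRO lm rm (iter n T) <-> para (iter n T).
Proof. by split=> [[]//|]; split=> //; apply: bounded_linear_iter; case: T_BRO. Qed.

Lemma circpow_iter n : para (iter n T) -> circpow lm rm T n =1 iter n T.
Proof. by apply: (oext_right_para bimod); apply: linear_iter. Qed.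

Lemma powcirc_iter n : para (iter n T) -> powcirc lm rm T n =1 iter n T.
Proof. by apply: (olif_right_para bimod); apply: linear_iter. Qed.

Lemma iter_right_paraP (A : nat -> V -> V) :
  (forall n, para (iter n T) ->
     forall x, A n x = oext lm rm (iter n.+1 T) x - iter n.+1 T x) ->
  (forall n x, A n x = 0) <-> forall n, para (iter n T).
Proof.
move=> A_eq; split=> [A0 | para_iter n x].
  elim=> [|n para_n]; first exact: right_para_id.
  apply: (right_para_oext bimod); first exact: linear_iter.
  by move=> x; apply/subr0_eq; rewrite -(A_eq n para_n) A0.
by rewrite A_eq // -/(circpow lm rm T n.+1) (circpow_iter (para_iter n.+1)) subrr.
Qed.

Lemma circ_assoc_circpow_eq0P :
  (forall n x, circ_assoc lm rm T (circpow lm rm T n) x = 0) <-> forall n, para (iter n T).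
Proof.
apply: iter_right_paraP => n para_n x.
by rewrite /circ_assoc /ocirc (funext (circpow_iter para_n)).
Qed.

Lemma circ_assoc_powcirc_eq0P :
  (forall n x, circ_assoc lm rm (powcirc lm rm T n) T x = 0) <-> forall n, para (iter n T).
Proof.
apply: iter_right_paraP => n para_n x.
have iterSr_comp : iter n T \o T = iter n.+1 T by apply: funext => y; rewrite iterSr.
by rewrite /circ_assoc /ocirc (funext (powcirc_iter para_n)) iterSr_comp -iterSr.
Qed.

End Powers.

Unset Implicit Arguments.
Set Strict Implicit.

Theorem mainTheorem2 (R : realType) (V : completeNormedModType R)
    (lm : oct R -> V -> V) (rm : V -> oct R -> V) (T : V -> V) :
  is_Banach_OBimodule lm rm ->
  is_BRO lm rm T ->
  let C1 := forall (n : nat) (x : V),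
      circ_assoc lm rm T (circpow lm rm T n) x = 0 in
  let C2 := forall n : nat, is_BRO lm rm (iter n T) in
  let C3 := forall (n : nat) (x : V),
      circ_assoc lm rm (powcirc lm rm T n) T x = 0 in
  ((C1 <-> C2) /\ (C2 <-> C3)) /\
  ((C1 \/ C2 \/ C3) ->
     (forall (n : nat) (x : V),
        circpow lm rm T n x = iter n T x /\ iter n T x = powcirc lm rm T n x) /\
     (forall (n m : nat) (x : V),
        ocirc lm rm (iter n T) (iter m T) x = iter (n + m) T x)).
Proof.
move=> bimod T_BRO /=.
have C1P := circ_assoc_circpow_eq0P bimod T_BRO.
have C3P := circ_assoc_powcirc_eq0P bimod T_BRO.
have C2P : (forall n, is_BRO lm rm (iter n T)) <-> forall n, right_para lm rm (iter n T).
  by split=> BRO n; apply/(BRO_iterP T_BRO).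
split.
  by split; [split=> [/C1P/C2P | /C2P/C1P] | split=> [/C2P/C3P | /C3P/C2P]].
move=> conds; have para_iter n : right_para lm rm (iter n T).
  by case: conds => [/C1P | [/C2P | /C3P]].
split=> [n x | n m x].
  by split; [exact: circpow_iter | symmetry; exact: powcirc_iter].
rewrite /ocirc (_ : iter n T \o iter m T = iter (n + m) T).
  exact: circpow_iter.
by apply: funext => y; rewrite iterD.
Qed.
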